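(* For every formula $\varphi$ of $\mathcal L$ there exist a finite set $Q_\varphi$ of new predicate symbols (not in $\mathcal L$) and a finite order clausal theory $S_\varphi$ over $\mathcal L\cup Q_\varphi$ such that: (a) $|Q_\varphi|\le 2\cdot|\varphi|$; (b) either $Q_\varphi=\emptyset$ and $S_\varphi=\{\square\}$, or $Q_\varphi=S_\varphi=\emptyset$, or $Q_\varphi\neq\emptyset$ and $\square\notin S_\varphi\neq\emptyset$; (c) for every interpretation $\mathfrak A$ for $\mathcal L$: $\mathfrak A\models\varphi$ if and only if there exists an expansion $\mathfrak A'$ of $\mathfrak A$ to $\mathcal L\cup Q_\varphi$ with $\mathfrak A'\models S_\varphi$; (d) $|S_\varphi|\le c\cdot|\varphi|^2$ for an absolute constant $c$ (independent of $\mathcal L$ and $\varphi$); (e) if $S_\varphi\notin\{\emptyset,\{\square\}\}$, then $Q_\varphi\ne\emptyset$ and every clause $C\in S_\varphi$ contains at least one predicate symbol from $Q_\varphi$; (f) $\mathrm{tcons}(S_\varphi)\setminus\{\bar0,\bar1\}\subseteq\mathrm{tcons}(\varphi)\setminus\{\bar0,\bar1\}$.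
   Context: First-order Gödel logic with truth constants. Fix a countable first-order language $\mathcal L$ and a countable set $C_{\mathcal L}$ with $\{0,1\}\subseteq C_{\mathcal L}\subseteq[0,1]$; for each $c\in C_{\mathcal L}$ there is a truth constant $\bar c$. Formulae are built from atoms and truth constants using $\neg$, $\Delta$, $\wedge,\vee,\rightarrow,\leftrightarrow$, $\eqcirc$ (equality), $\prec$ (strict order), $\forall,\exists$. An interpretation has a nonempty universe, ordinary functions and $[0,1]$-valued relations. Truth values under an assignment $e$: atoms by the relations; $\|\bar c\|=c$; $\|\neg\varphi\|=1$ if $\|\varphi\|=0$ else $0$; $\|\Delta\varphi\|=1$ if $\|\varphi\|=1$ else $0$; $\wedge=\min$, $\vee=\max$; $\|\varphi\to\psi\|=1$ if $\|\varphi\|\le\|\psi\|$ else $\|\psi\|$; $\|\varphi\leftrightarrow\psi\|=\min(\|\varphi\to\psi\|,\|\psi\to\varphi\|)$; $\|\varphi\eqcirc\psi\|=1$ if equal else $0$; $\|\varphi\prec\psi\|=1$ if $\|\varphi\|<\|\psi\|$ else $0$; $\forall=\inf$, $\exists=\sup$. $\mathcal I\models\varphi$ iff $\|\varphi\|^{\mathcal I}_e=1$ for all assignments $e$. For languages $\mathcal L_1\subseteq\mathcal L_2$, an interpretation for $\mathcal L_2$ is an expansion of one for $\mathcal L_1$ if they have the same universe and agree on the symbols of $\mathcal L_1$. Size: $|x|=1$ for a variable, $|f(t_1,\dots,t_n)|=|p(t_1,\dots,t_n)|=1+\sum|t_i|$; $|\bar c|=1$; $|\neg\varphi|=|\Delta\varphi|=1+|\varphi|$;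 $|\varphi\diamond\psi|=1+|\varphi|+|\psi|$; $|Qx\,\varphi|=2+|\varphi|$. $\mathrm{tcons}(\cdot)$ is the set of truth constants occurring. Order clauses: a quantified atom is $Qx\,p(t_0,\dots,t_n)$ with $Q\in\{\forall,\exists\}$, $x$ occurring in $p(t_0,\dots,t_n)$, and for each $i$ either $t_i=x$ or $x$ does not occur in $t_i$. An order literal is $\varepsilon_1\diamond\varepsilon_2$, each $\varepsilon_i$ an atom, truth constant or quantified atom, $\diamond\in\{\eqcirc,\prec\}$. An order clause is a finite set of order literals ($\square$ = empty clause); $\mathcal I\models_e C$ iff some literal of $C$ has value $1$ under $e$; $\mathcal I\models C$ iff for all $e$; $\mathcal I\models S$ iff $\mathcal I\models C$ for all $C\in S$. $|C|=\sum_{l\in C}|l|$, $|S|=\sum_{C\in S}|C|$. *)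

From HB Require Import structures.
From mathcomp Require Import all_boot all_order all_algebra.
From mathcomp Require Import boolp classical_sets cardinality reals.
From mathcomp Require Import Rstruct.
From Stdlib Require Import Rdefinitions.

Set Implicit Arguments.
Unset Strict Implicit.
Unset Printing Implicit Defensive.

Import Order.TTheory GRing.Theory Num.Theory.
Local Open Scope classical_set_scope.
Local Open Scope ring_scope.

Notation R := Rdefinitions.R.

Record language := Language {
  fsym : countType;
  psym : countType;
  farity : fsym -> nat;
  parity : psym -> nat;
  tcset : set R;
  tc0 : tcset 0;
  tc1 : tcset 1;
  tc_unit : forall c, tcset c -> 0 <= c <= 1;
  tc_count : countable tcset
}.

(* L ∪ Q : extension of L by fresh predicate symbols, one for each entry of
   Q (the entry being its arity).  The new symbols are [inr i], i < size Q. *)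
Definition ext_parity (L : language) (Q : seq nat)
  (p : (psym L + 'I_(size Q))%type) : nat :=
  match p with inl p => parity p | inr i => nth 0%N Q i end.

Definition ext (L : language) (Q : seq nat) : language :=
  @Language (fsym L) (psym L + 'I_(size Q))%type (@farity L) (@ext_parity L Q)
    (tcset L) (tc0 L) (tc1 L) (@tc_unit L) (tc_count L).

Inductive term (F : Type) :=
| Var : nat -> term F
| App : F -> seq (term F) -> term F.
Arguments Var {F}.

Inductive formula (L : language) :=
| FAtom : psym L -> seq (term (fsym L)) -> formula L
| FConst : R -> formula L
| FNeg : formula L -> formula L
| FDelta : formula L -> formula L
| FAnd : formula L -> formula L -> formula L
| FOr : formula L -> formula L -> formula L
| FImp : formula L -> formula L -> formula L
| FEquiv : formula L -> formula L -> formula L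
| FEqc : formula L -> formula L -> formula L
| FPrec : formula L -> formula L -> formula L
| FAll : nat -> formula L -> formula L
| FEx : nat -> formula L -> formula L.

Fixpoint wf_term (L : language) (t : term (fsym L)) : bool :=
  match t with
  | Var _ => true
  | App f ts => (size ts == farity f) && all (@wf_term L) ts
  end.

Fixpoint wf_formula (L : language) (phi : formula L) : Prop :=
  match phi with
  | FAtom p ts => size ts = parity p /\ all (@wf_term L) ts
  | FConst c => tcset L c
  | FNeg a | FDelta a | FAll _ a | FEx _ a => wf_formula a
  | FAnd a b | FOr a b | FImp a b | FEquiv a b | FEqc a b | FPrec a b =>
      wf_formula a /\ wf_formula b
  end.

Fixpoint tsize (F : Type) (t : term F) : nat :=
  match t with
  | Var _ => 1
  | App _ ts => 1 + sumn (map (@tsize F) ts)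
  end%N.

Fixpoint fsize (L : language) (phi : formula L) : nat :=
  match phi with
  | FAtom _ ts => 1 + sumn (map (@tsize _) ts)
  | FConst _ => 1
  | FNeg a | FDelta a => 1 + fsize a
  | FAnd a b | FOr a b | FImp a b | FEquiv a b | FEqc a b | FPrec a b =>
      1 + fsize a + fsize b
  | FAll _ a | FEx _ a => 2 + fsize a
  end%N.

Fixpoint fconsts (L : language) (phi : formula L) : seq R :=
  match phi with
  | FAtom _ _ => [::]
  | FConst c => [:: c]
  | FNeg a | FDelta a | FAll _ a | FEx _ a => fconsts a
  | FAnd a b | FOr a b | FImp a b | FEquiv a b | FEqc a b | FPrec a b =>
      fconsts a ++ fconsts b
  end.

Fixpoint occurs (F : Type) (x : nat) (t : term F) : bool :=
  match t with
  | Var y => y == x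
  | App _ ts => has (@occurs F x) ts
  end.

Definition is_var (F : Type) (x : nat) (t : term F) : bool :=
  if t is Var y then y == x else false.

(* quantifier: true = ∀, false = ∃ *)
Inductive oexpr (L : language) :=
| OAtom : psym L -> seq (term (fsym L)) -> oexpr L
| OConst : R -> oexpr L
| OQAtom : bool -> nat -> psym L -> seq (term (fsym L)) -> oexpr L.

(* order literal  e1 ◇ e2, ◇ = ≗ (olprec = false) or ≺ (olprec = true) *)
Record olit (L : language) := OLit { ollhs : oexpr L; olprec : bool; olrhs : oexpr L }.

Definition oclause (L : language) := seq (olit L).
Definition otheory (L : language) := seq (oclause L).

Definition wf_oexpr (L : language) (e : oexpr L) : Prop :=
  match e with
  | OAtom p ts => size ts = parity p /\ all (@wf_term L) ts
  | OConst c => tcset L c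
  | OQAtom _ x p ts =>
      [/\ size ts = parity p, all (@wf_term L) ts,
          has (occurs x) ts & all (fun t => is_var x t || ~~ occurs x t) ts]
  end.

Definition wf_olit (L : language) (l : olit L) : Prop :=
  wf_oexpr (ollhs l) /\ wf_oexpr (olrhs l).

Definition wf_otheory (L : language) (S : otheory L) : Prop :=
  forall C, List.In C S -> forall l, List.In l C -> wf_olit l.

Definition oesize (L : language) (e : oexpr L) : nat :=
  match e with
  | OAtom _ ts => 1 + sumn (map (@tsize _) ts)
  | OConst _ => 1
  | OQAtom _ _ _ ts => 2 + (1 + sumn (map (@tsize _) ts))
  end%N.

Definition olsize (L : language) (l : olit L) : nat :=
  (1 + oesize (ollhs l) + oesize (olrhs l))%N.

Definition ocsize (L : language) (C : oclause L) : nat := sumn (map (@olsize L) C).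
Definition otsize (L : language) (S : otheory L) : nat := sumn (map (@ocsize L) S).

Definition oeconsts (L : language) (e : oexpr L) : seq R :=
  if e is OConst c then [:: c] else [::].
Definition olconsts (L : language) (l : olit L) : seq R :=
  oeconsts (ollhs l) ++ oeconsts (olrhs l).
Definition otconsts (L : language) (S : otheory L) : seq R :=
  flatten (map (fun C => flatten (map (@olconsts L) C)) S).

Definition oepred (L : language) (e : oexpr L) : option (psym L) :=
  match e with
  | OAtom p _ => Some p
  | OConst _ => None
  | OQAtom _ _ p _ => Some p
  end.

Definition has_new_pred (L : language) (Q : seq nat) (C : oclause (ext L Q)) : Prop :=
  exists l, List.In l C /\
    ((exists i, oepred (ollhs l) = Some (inr i)) \/
     (exists i, oepred (olrhs l) = Some (inr i))).

Record interp (L : language) (U : Type) := Interp {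
  ifun : fsym L -> seq U -> U;
  irel : psym L -> seq U -> R;
  irel_unit : forall p us, 0 <= irel p us <= 1
}.

Definition upd (U : Type) (e : nat -> U) (x : nat) (u : U) : nat -> U :=
  fun y => if y == x then u else e y.

Section Eval.
Variables (L : language) (U : Type) (A : interp L U).

Fixpoint teval (e : nat -> U) (t : term (fsym L)) : U :=
  match t with
  | Var x => e x
  | App f ts => ifun A f (map (teval e) ts)
  end.

Definition impl_val (a b : R) : R := if a <= b then 1 else b.

Fixpoint feval (phi : formula L) (e : nat -> U) : R :=
  match phi with
  | FAtom p ts => irel A p (map (teval e) ts)
  | FConst c => c
  | FNeg a => if feval a e == 0 then 1 else 0
  | FDelta a => if feval a e == 1 then 1 else 0
  | FAnd a b => Num.min (feval a e) (feval b e)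
  | FOr a b => Num.max (feval a e) (feval b e)
  | FImp a b => impl_val (feval a e) (feval b e)
  | FEquiv a b => Num.min (impl_val (feval a e) (feval b e))
                          (impl_val (feval b e) (feval a e))
  | FEqc a b => if feval a e == feval b e then 1 else 0
  | FPrec a b => if feval a e < feval b e then 1 else 0
  | FAll x a => inf [set r | exists u : U, r = feval a (upd e x u)]
  | FEx x a => sup [set r | exists u : U, r = feval a (upd e x u)]
  end.

Definition fmodels (phi : formula L) : Prop := forall e, feval phi e = 1.

Definition oeval (o : oexpr L) (e : nat -> U) : R :=
  match o with
  | OAtom p ts => irel A p (map (teval e) ts)
  | OConst c => c
  | OQAtom q x p ts =>
      let vals := [set r | exists u : U, r = irel A p (map (teval (upd e x u)) ts)] in
      if q then inf vals else sup vals
  end.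

Definition olit_holds (e : nat -> U) (l : olit L) : bool :=
  if olprec l then oeval (ollhs l) e < oeval (olrhs l) e
  else oeval (ollhs l) e == oeval (olrhs l) e.

Definition cmodels (C : oclause L) : Prop := forall e, has (olit_holds e) C.

Definition tmodels (S : otheory L) : Prop := forall C, List.In C S -> cmodels C.
End Eval.

(* A' (for L ∪ Q) is an expansion of A (for L): same universe U (by typing),
   same interpretation of all symbols of L. *)
Definition expansion (L : language) (Q : seq nat) (U : Type)
  (A : interp L U) (A' : interp (ext L Q) U) : Prop :=
  (forall (f : fsym L) us, ifun A' f us = ifun A f us) /\
  (forall (p : psym L) us, irel A' (inl p) us = irel A p us).

From Pilot Require Import Defs.
From HB Require Import structures.
From mathcomp Require Import all_boot all_order all_algebra zify.
From mathcomp Require Import boolp classical_sets reals Rstruct.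
Import Defs.

(* A Tseitin-style renaming.  Every node of the syntax tree of phi gets a
   fresh predicate over all variables of phi, and a few order clauses force
   it to equal the truth function of the node's connective applied to the
   predicates of the children: all connectives of Gödel logic are determined
   by the relative order of their arguments, which ≗ and ≺ can express; at
   a quantifier node the clause compares with the quantified atom of the
   child predicate.  By induction on phi, an expansion satisfies these
   clauses iff every fresh predicate takes the value of its subformula, so
   adding the unit clause "root ≗ 1" characterises the validity of phi.
   Each node contributes O(|phi|) symbols, whence the quadratic bound. *)

Set Implicit Arguments.
Unset Strict Implicit.
Unset Printing Implicit Defensive.
Import Order.TTheory GRing.Theory Num.Theory.
Local Open Scope classical_set_scope.
Local Open Scope ring_scope.

Definition term_nested_ind (F : Type) (P : term F -> Prop)
  (HV : forall x, P (Var x))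
  (HA : forall f ts, List.Forall P ts -> P (App f ts)) : forall t, P t :=
  fix go t := match t return P t with
  | Var x => HV x
  | App f ts => HA f ts ((fix go_seq ts : List.Forall P ts :=
       match ts with
       | [::] => List.Forall_nil P
       | t :: ts' => List.Forall_cons t (go t) (go_seq ts')
       end) ts)
  end.

Lemma eq_map_Forall (A B : Type) (f g : A -> B) (s : seq A) :
  List.Forall (fun x => f x = g x) s -> map f s = map g s.
Proof. by elim=> //= x s' -> _ ->. Qed.

Fixpoint tvars (F : Type) (t : term F) : seq nat :=
  match t with
  | Var x => [:: x]
  | App _ ts => flatten (map (@tvars F) ts)
  end.

Lemma size_tvars (F : Type) (t : term F) : (size (tvars t) <= tsize t)%N.
Proof.
elim/term_nested_ind: t => //= f ts; elim=> //= t ts' Ht _ IH; rewrite size_cat; lia.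
Qed.

Fixpoint fvars (L : language) (phi : formula L) : seq nat :=
  match phi with
  | FAtom _ ts => flatten (map (@tvars _) ts)
  | FConst _ => [::]
  | FNeg a | FDelta a => fvars a
  | FAll x a | FEx x a => x :: fvars a
  | FAnd a b | FOr a b | FImp a b | FEquiv a b | FEqc a b | FPrec a b =>
      fvars a ++ fvars b
  end.

Lemma size_fvars (L : language) (phi : formula L) : (size (fvars phi) <= fsize phi)%N.
Proof.
elim: phi => //= [_ ts|*|*|*|*|*|*|*|*|*|*]; rewrite ?size_cat; try lia.
elim: ts => //= t ts; rewrite size_cat; have := size_tvars t; lia.
Qed.

Lemma fsize_gt0 (L : language) (phi : formula L) : (0 < fsize phi)%N.
Proof. by case: phi. Qed.

Lemma eq_values (U : Type) (f g : U -> R) :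
  f =1 g -> [set r | exists u, r = f u] = [set r | exists u, r = g u].
Proof. by move=> /funext ->. Qed.

Lemma inf_itv (E : set R) a b : (exists x, E x) -> (forall x, E x -> a <= x <= b) ->
  a <= inf E <= b.
Proof.
move=> [x Ex] Eab; have /andP[ax xb] := Eab x Ex; apply/andP; split.
  by apply: lb_le_inf; [exists x | move=> y /Eab /andP[]].
by apply: le_trans xb; apply: ge_inf Ex; exists a => y /Eab /andP[].
Qed.

Lemma sup_itv (E : set R) a b : (exists x, E x) -> (forall x, E x -> a <= x <= b) ->
  a <= sup E <= b.
Proof.
move=> [x Ex] Eab; have /andP[ax xb] := Eab x Ex; apply/andP; split.
  by apply: le_trans ax _; apply: ub_le_sup Ex; exists b => y /Eab /andP[].
by apply: ge_sup; [exists x | move=> y /Eab /andP[]].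
Qed.

Section Evaluation.
Variables (L : language) (U : Type) (A : interp L U).

Lemma teval_agree (e e' : nat -> U) t :
  {in tvars t, e =1 e'} -> teval A e t = teval A e' t.
Proof.
elim/term_nested_ind: t => [x /= -> //|f ts IH ee' /=]; first exact: mem_head.
congr (ifun A f _); apply: eq_map_Forall; elim: IH ee' => //= t ts' Ht _ IH ee'.
constructor; [apply: Ht | apply: IH] => v vt; apply: ee'; rewrite mem_cat vt ?orbT //.
Qed.

Lemma teval_expansion (Q : seq nat) (A' : interp (ext L Q) U) e t :
  (forall (f : fsym L) us, ifun A' f us = ifun A f us) -> teval A' e t = teval A e t.
Proof.
move=> AA'; elim/term_nested_ind: t => //= f ts IH; rewrite AA'.
by congr (ifun A f _); apply: eq_map_Forall.
Qed.

Lemma feval_agree (phi : formula L) (e e' : nat -> U) :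
  {in fvars phi, e =1 e'} -> feval A phi e = feval A phi e'.
Proof.
elim: phi e e' => [p ts|c|a IHa|a IHa|a IHa b IHb|a IHa b IHb|a IHa b IHb|a IHa b IHb
  |a IHa b IHb|a IHa b IHb|x a IHa|x a IHa] e e' /= ee'.
- congr (irel A p _); elim: ts ee' => //= t ts IH ee'.
  rewrite IH => [|v vts]; last by apply: ee'; rewrite mem_cat vts orbT.
  by rewrite (@teval_agree e e') // => v vt; apply: ee'; rewrite mem_cat vt.
- by [].
- by rewrite (IHa e e').
- by rewrite (IHa e e').
all: try by rewrite (IHa e e') ?(IHb e e') // => v vi;
  apply: ee'; rewrite mem_cat vi ?orbT.
all: congr (_ _); apply: eq_values => u; apply: IHa => v vi; rewrite /upd.
all: by case: eqP => // _; apply: ee'; rewrite inE vi orbT.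
Qed.

Lemma impl_val_itv a b : 0 <= b <= 1 -> 0 <= impl_val a b <= 1.
Proof. by rewrite /impl_val; case: ifP; rewrite ?ler01 ?lexx. Qed.

Lemma feval_itv (u0 : U) (phi : formula L) e :
  wf_formula phi -> 0 <= feval A phi e <= 1.
Proof.
elim: phi e => [p ts|c|a IHa|a IHa|a IHa b IHb|a IHa b IHb|a IHa b IHb|a IHa b IHb
  |a IHa b IHb|a IHa b IHb|x a IHa|x a IHa] e /=.
- by move=> _; apply: irel_unit.
- exact: tc_unit.
all: try by move=> _; case: ifP; rewrite ?ler01 ?lexx.
- by move=> [/(IHa e) + /(IHb e)]; rewrite /Num.min; case: ifP.
- by move=> [/(IHa e) + /(IHb e)]; rewrite /Num.max; case: ifP.
- by move=> [_ /(IHb e)/impl_val_itv].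
- by move=> [/(IHa e)/impl_val_itv + /(IHb e)/impl_val_itv]; rewrite /Num.min; case: ifP.
- move=> a_wf; apply: inf_itv => [|_ [u ->]]; last exact: IHa.
  by exists (feval A a (upd e x u0)), u0.
- move=> a_wf; apply: sup_itv => [|_ [u ->]]; last exact: IHa.
  by exists (feval A a (upd e x u0)), u0.
Qed.

End Evaluation.

Section ClauseTables.
Implicit Types q x y : R.

Lemma clauses_negE q x :
  ((q == 0) || (x == 0)) && [|| q == 1, 0 < x | x < 0] = (q == if x == 0 then 1 else 0).
Proof. by case: (ltgtP x 0) => [_|_|E]; rewrite ?E ?orbT ?orbF ?andbT ?eqxx. Qed.

Lemma clauses_deltaE q x :
  ((q == 0) || (x == 1)) && [|| q == 1, x < 1 | 1 < x] = (q == if x == 1 then 1 else 0).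
Proof. by case: (ltgtP x 1) => [_|_|E]; rewrite ?E ?orbT ?orbF ?andbT ?eqxx. Qed.

Lemma clauses_minE q x y :
  [|| q == y, x < y | x == y] && ((q == x) || (y < x)) = (q == Num.min x y).
Proof. by case: (ltgtP x y) => [_|_|E]; rewrite ?E ?orbT ?orbF ?andbT ?eqxx ?minxx. Qed.

Lemma clauses_maxE q x y :
  ((q == y) || (y < x)) && [|| q == x, x < y | x == y] = (q == Num.max x y).
Proof. by case: (ltgtP x y) => [_|_|E]; rewrite ?E ?orbT ?orbF ?andbT ?eqxx ?maxxx. Qed.

Lemma clauses_implE q x y :
  ((q == 1) || (y < x)) && [|| q == y, x < y | x == y] = (q == impl_val x y).
Proof.
by rewrite /impl_val; case: (ltgtP x y) => [_|_|E]; rewrite ?E ?orbT ?orbF ?andbT ?eqxx.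
Qed.

Lemma clauses_equivE q x y : x <= 1 -> y <= 1 ->
  [&& [|| q == 1, x < y | y < x], [|| q == x, x == y | y < x]
    & [|| q == y, x == y | x < y]]
  = (q == Num.min (impl_val x y) (impl_val y x)).
Proof.
rewrite /impl_val => x1 y1.
case: (ltgtP x y) => [_|_|E]; rewrite ?E ?orbT ?orbF ?andbT ?eqxx //=.
- by rewrite min_r.
- by rewrite min_l.
- by rewrite minxx.
Qed.

Lemma clauses_eqcE q x y :
  ((q == 0) || (x == y)) && [|| q == 1, x < y | y < x] = (q == if x == y then 1 else 0).
Proof. by case: (ltgtP x y) => [_|_|E]; rewrite ?E ?orbT ?orbF ?andbT ?eqxx. Qed.

Lemma clauses_precE q x y :
  ((q == 0) || (x < y)) && [|| q == 1, y < x | x == y] = (q == if x < y then 1 else 0).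
Proof. by case: (ltgtP x y) => [_|_|E]; rewrite ?E ?orbT ?orbF ?andbT ?eqxx ?ltxx. Qed.

End ClauseTables.

Lemma tmodels_cat (L : language) (U : Type) (A : interp L U) (S1 S2 : otheory L) :
  tmodels A (S1 ++ S2) <-> tmodels A S1 /\ tmodels A S2.
Proof.
split=> [AS|[AS1 AS2] C CS].
  by split=> C CS; apply: AS; apply: List.in_or_app; [left|right].
by case: (List.in_app_or _ _ _ CS); [apply: AS1|apply: AS2].
Qed.

Lemma tmodels_allP (L : language) (U : Type) (A : interp L U) (S : otheory L) :
  tmodels A S <-> forall e, all (has (olit_holds A e)) S.
Proof.
elim: S => [|C S IH]; first by split=> // _ C [].
split=> [AS e /=|AS C' [<- e|C'S]].
- rewrite (AS C (or_introl erefl) e); apply: (proj1 IH) => C' C'S.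
  exact: AS C' (or_intror C'S).
- by case/andP: (AS e).
- by apply: (proj2 IH) C' C'S => e; case/andP: (AS e).
Qed.

Lemma wf_term_ext (L : language) (Q : seq nat) (t : term (fsym L)) :
  @wf_term (ext L Q) t = wf_term t.
Proof.
by elim/term_nested_ind: t => //= f ts IH; congr andb; elim: IH => //= t ts' -> _ ->.
Qed.

Lemma wf_otheory_cat (L : language) (S1 S2 : otheory L) :
  wf_otheory S1 -> wf_otheory S2 -> wf_otheory (S1 ++ S2).
Proof. by move=> S1wf S2wf C /(List.in_app_or S1 S2 C)[/S1wf|/S2wf]. Qed.

Lemma wf_otheory_Forall (L : language) (S : otheory L) :
  List.Forall (List.Forall (@wf_olit L)) S -> wf_otheory S.
Proof. by move=> /List.Forall_forall Swf C /Swf /List.Forall_forall. Qed.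

Lemma otsize_cat (L : language) (S1 S2 : otheory L) :
  otsize (S1 ++ S2) = (otsize S1 + otsize S2)%N.
Proof. by rewrite /otsize map_cat sumn_cat. Qed.

Lemma otconsts_cat (L : language) (S1 S2 : otheory L) :
  otconsts (S1 ++ S2) = otconsts S1 ++ otconsts S2.
Proof. by rewrite /otconsts map_cat flatten_cat. Qed.

Lemma leq_otsize_cat (L : language) (S1 S2 : otheory L) m1 m2 :
  (otsize S1 <= m1)%N -> (otsize S2 <= m2)%N -> (otsize (S1 ++ S2) <= m1 + m2)%N.
Proof. by rewrite otsize_cat; apply: leq_add. Qed.

Lemma sub_otconsts_cat (L : language) (S1 S2 : otheory L) (X : seq R) :
  {subset otconsts S1 <= X} -> {subset otconsts S2 <= X} ->
  {subset otconsts (S1 ++ S2) <= X}.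
Proof. by move=> S1X S2X r; rewrite otconsts_cat mem_cat => /orP[/S1X|/S2X]. Qed.

Lemma Forall_cat (T : Type) (P : T -> Prop) (s1 s2 : seq T) :
  List.Forall P s1 -> List.Forall P s2 -> List.Forall P (s1 ++ s2).
Proof. by elim=> //= x s1' Px _ IH s2P; constructor; last exact: IH. Qed.

Section Translation.
Variables (L : language) (n : nat) (V : seq nat).

(* The fresh predicate i stands for the subformula at preorder position i,
   positions being counted with fsize (a quantifier node skips one).  All
   fresh predicates take the list V of variables, repetitions included. *)
Definition new_preds : seq nat := nseq n.+1 (size V).
Definition LQ : language := ext L new_preds.
Definition qidx (i : nat) : 'I_(size new_preds) := inord i.
Definition qatom (i : nat) : oexpr LQ := OAtom (inr (qidx i) : psym LQ) (map Var V).
Definition eq_lit (a b : oexpr LQ) : olit LQ := OLit a false b.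
Definition lt_lit (a b : oexpr LQ) : olit LQ := OLit a true b.
Definition const0 : oexpr LQ := OConst _ 0.
Definition const1 : oexpr LQ := OConst _ 1.

Definition node_clauses (phi : formula L) (s : nat) : otheory LQ :=
  let q := qatom s in let x := qatom s.+1 in
  match phi with
  | FAtom p ts => [:: [:: eq_lit q (OAtom (inl p : psym LQ) ts)]]
  | FConst c => [:: [:: eq_lit q (OConst _ c)]]
  | FNeg a =>
      [:: [:: eq_lit q const0; eq_lit x const0];
          [:: eq_lit q const1; lt_lit const0 x; lt_lit x const0]]
  | FDelta a =>
      [:: [:: eq_lit q const0; eq_lit x const1];
          [:: eq_lit q const1; lt_lit x const1; lt_lit const1 x]]
  | FAnd a b => let y := qatom (s.+1 + fsize a) in
      [:: [:: eq_lit q y; lt_lit x y; eq_lit x y]; [:: eq_lit q x; lt_lit y x]]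
  | FOr a b => let y := qatom (s.+1 + fsize a) in
      [:: [:: eq_lit q y; lt_lit y x]; [:: eq_lit q x; lt_lit x y; eq_lit x y]]
  | FImp a b => let y := qatom (s.+1 + fsize a) in
      [:: [:: eq_lit q const1; lt_lit y x];
          [:: eq_lit q y; lt_lit x y; eq_lit x y]]
  | FEquiv a b => let y := qatom (s.+1 + fsize a) in
      [:: [:: eq_lit q const1; lt_lit x y; lt_lit y x];
          [:: eq_lit q x; eq_lit x y; lt_lit y x];
          [:: eq_lit q y; eq_lit x y; lt_lit x y]]
  | FEqc a b => let y := qatom (s.+1 + fsize a) in
      [:: [:: eq_lit q const0; eq_lit x y];
          [:: eq_lit q const1; lt_lit x y; lt_lit y x]]
  | FPrec a b => let y := qatom (s.+1 + fsize a) in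
      [:: [:: eq_lit q const0; lt_lit x y];
          [:: eq_lit q const1; lt_lit y x; eq_lit x y]]
  | FAll v a => [:: [:: eq_lit q (OQAtom true v (inr (qidx s.+1) : psym LQ) (map Var V))]]
  | FEx v a => [:: [:: eq_lit q (OQAtom false v (inr (qidx s.+1) : psym LQ) (map Var V))]]
  end.

Fixpoint trans (phi : formula L) (s : nat) : otheory LQ :=
  node_clauses phi s ++
  match phi with
  | FAtom _ _ | FConst _ => [::]
  | FNeg a | FDelta a | FAll _ a | FEx _ a => trans a s.+1
  | FAnd a b | FOr a b | FImp a b | FEquiv a b | FEqc a b | FPrec a b =>
      trans a s.+1 ++ trans b (s.+1 + fsize a)
  end.

Definition theory (phi : formula L) : otheory LQ :=
  [:: eq_lit (qatom 0) const1] :: trans phi 0.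

End Translation.

Arguments qatom : simpl never.

Section Correctness.
Variables (L : language) (n : nat) (V : seq nat) (U : Type) (A : interp L U)
  (A' : interp (LQ L n V) U).
Hypothesis AA' : expansion A A'.

Definition qval (i : nat) (e : nat -> U) : R := irel A' (inr (qidx n V i)) (map e V).

Lemma oeval_qatom e i : oeval A' (qatom L n V i) e = qval i e.
Proof. by rewrite /qatom /= -map_comp. Qed.
Lemma olit_holds_eq e a b : olit_holds A' e (eq_lit a b) = (oeval A' a e == oeval A' b e).
Proof. by []. Qed.
Lemma olit_holds_lt e a b : olit_holds A' e (lt_lit a b) = (oeval A' a e < oeval A' b e).
Proof. by []. Qed.
Lemma oeval_const0 e : oeval A' (const0 L n V) e = 0. Proof. by []. Qed.
Lemma oeval_const1 e : oeval A' (const1 L n V) e = 1. Proof. by []. Qed.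

Lemma qval_le1 i e : qval i e <= 1.
Proof. by case/andP: (irel_unit A' (inr (qidx n V i)) (map e V)). Qed.

Definition correct_at (phi : formula L) (s : nat) : Prop :=
  forall e, qval s e = feval A phi e.

Definition children_correct (phi : formula L) (s : nat) : Prop :=
  match phi with
  | FAtom _ _ | FConst _ => True
  | FNeg a | FDelta a | FAll _ a | FEx _ a => correct_at a s.+1
  | FAnd a b | FOr a b | FImp a b | FEquiv a b | FEqc a b | FPrec a b =>
      correct_at a s.+1 /\ correct_at b (s.+1 + fsize a)
  end.

Lemma node_clauses_holdsE phi s e : children_correct phi s ->
  all (has (olit_holds A' e)) (node_clauses n V phi s) = (qval s e == feval A phi e).
Proof.
case: phi => [p ts|c|a|a|a b|a b|a b|a b|a b|a b|x a|x a]; rewrite /node_clauses /=;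
  rewrite !(olit_holds_eq, olit_holds_lt, oeval_qatom, oeval_const0, oeval_const1);
  rewrite ?orbF ?andbT /=.
- move=> _; rewrite AA'.2; congr (_ == irel A p _).
  by apply: eq_map => t; apply: teval_expansion; apply: AA'.1.
- by [].
- by move=> Ca; rewrite clauses_negE (Ca e).
- by move=> Ca; rewrite clauses_deltaE (Ca e).
- by move=> [Ca Cb]; rewrite clauses_minE (Ca e) (Cb e).
- by move=> [Ca Cb]; rewrite clauses_maxE (Ca e) (Cb e).
- by move=> [Ca Cb]; rewrite clauses_implE (Ca e) (Cb e).
- by move=> [Ca Cb]; rewrite clauses_equivE ?qval_le1 // (Ca e) (Cb e).
- by move=> [Ca Cb]; rewrite clauses_eqcE (Ca e) (Cb e).
- by move=> [Ca Cb]; rewrite clauses_precE (Ca e) (Cb e).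
all: move=> Ca; under eq_values => u do
  rewrite -map_comp -[irel A' _ _]/(qval s.+1 (upd e x u)) Ca.
all: by [].
Qed.

Fixpoint subformulas_correct (phi : formula L) (s : nat) : Prop :=
  correct_at phi s /\
  match phi with
  | FAtom _ _ | FConst _ => True
  | FNeg a | FDelta a | FAll _ a | FEx _ a => subformulas_correct a s.+1
  | FAnd a b | FOr a b | FImp a b | FEquiv a b | FEqc a b | FPrec a b =>
      subformulas_correct a s.+1 /\ subformulas_correct b (s.+1 + fsize a)
  end.

Lemma subformulas_correct_at phi s : subformulas_correct phi s -> correct_at phi s.
Proof. by case: phi => [??|?|?|?|??|??|??|??|??|??|??|??] []. Qed.

Lemma node_clauses_models (P P' : Prop) phi s :
  (P <-> P') -> (P' -> children_correct phi s) ->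
  tmodels A' (node_clauses n V phi s) /\ P <-> correct_at phi s /\ P'.
Proof.
move=> PP' P'ch; split=> [[/tmodels_allP T /PP' p']|[C p']].
  by split=> // e; apply/eqP; rewrite -node_clauses_holdsE ?T //; exact: P'ch.
split; last exact/PP'.
by apply/tmodels_allP => e; rewrite node_clauses_holdsE ?C //; exact: P'ch.
Qed.

Lemma trans_modelsP phi s : tmodels A' (trans n V phi s) <-> subformulas_correct phi s.
Proof.
elim: phi s => [p ts|c|a IHa|a IHa|a IHa b IHb|a IHa b IHb|a IHa b IHb|a IHa b IHb
  |a IHa b IHb|a IHa b IHb|x a IHa|x a IHa] s;
  apply: iff_trans (tmodels_cat _ _ _) _; apply: node_clauses_models.
all: try by split=> // _ C [].
all: try by [apply: IHa | move/subformulas_correct_at].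
all: try by case=> /subformulas_correct_at ? /subformulas_correct_at.
all: apply: iff_trans (tmodels_cat _ _ _) _.
all: by split=> -[/IHa ? /IHb ?].
Qed.

End Correctness.

Section Theory.
Variables (L : language) (U : Type) (A : interp L U) (phi : formula L).
Let n := fsize phi.
Let V := fvars phi.

Lemma theory_modelsP (A' : interp (LQ L n V) U) : expansion A A' ->
  tmodels A' (theory n V phi) <-> fmodels A phi /\ subformulas_correct A A' phi 0.
Proof.
move=> AA'; apply: iff_trans (@tmodels_cat _ _ _ [:: _] _) _.
rewrite (trans_modelsP AA').
split=> [[/tmodels_allP C0 sc]|[phi1 sc]]; split=> //.
  move=> e; rewrite -(subformulas_correct_at sc e); apply/eqP.
  by move: (C0 e); rewrite /= olit_holds_eq oeval_qatom orbF andbT.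
apply/tmodels_allP => e /=.
by rewrite olit_holds_eq oeval_qatom (subformulas_correct_at sc e) phi1 eqxx.
Qed.

End Theory.

Fixpoint subformula_at (L : language) (psi : formula L) (s i : nat) :
    option (formula L) :=
  if i == s then Some psi else
  match psi with
  | FAtom _ _ | FConst _ => None
  | FNeg a | FDelta a | FAll _ a | FEx _ a => subformula_at a s.+1 i
  | FAnd a b | FOr a b | FImp a b | FEquiv a b | FEqc a b | FPrec a b =>
      if (i < s.+1 + fsize a)%N then subformula_at a s.+1 i
      else subformula_at b (s.+1 + fsize a) i
  end.

Lemma subformula_at_root (L : language) (psi : formula L) s :
  subformula_at psi s s = Some psi.
Proof. by case: psi => *; rewrite /= eqxx. Qed.

Lemma subformula_at_wf (L : language) (psi chi : formula L) s i :
  wf_formula psi -> subformula_at psi s i = Some chi -> wf_formula chi.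
Proof.
elim: psi s => [p ts|c|a IHa|a IHa|a IHa b IHb|a IHa b IHb|a IHa b IHb|a IHa b IHb
  |a IHa b IHb|a IHa b IHb|x a IHa|x a IHa] s /=; case: (i == s) => [w [<-] //|] //.
all: try exact: IHa.
all: by case=> wa wb; case: ifP => _; [exact: IHa | exact: IHb].
Qed.

Section Expansion.
Variables (L : language) (U : Type) (A : interp L U) (u0 : U) (phi : formula L).
Hypothesis wf_phi : wf_formula phi.
Let n := fsize phi.
Let V := fvars phi.

Definition env (us : seq U) (v : nat) : U := nth u0 us (index v V).

Lemma env_map e : {in V, env (map e V) =1 e}.
Proof. by move=> v vV; rewrite /env (nth_map v) ?index_mem // nth_index. Qed.

Definition subformula_rel (p : psym (LQ L n V)) (us : seq U) : R :=
  match p with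
  | inl p => irel A p us
  | inr i => if subformula_at phi 0 i is Some chi then feval A chi (env us) else 0
  end.

Lemma subformula_rel_unit p us : 0 <= subformula_rel p us <= 1.
Proof.
case: p => [p|i] /=; first exact: irel_unit.
case E: subformula_at => [chi|]; last by rewrite lexx ler01.
exact/(feval_itv _ u0)/(subformula_at_wf wf_phi E).
Qed.

Definition subformula_interp : interp (LQ L n V) U :=
  @Interp (LQ L n V) U (ifun A) subformula_rel subformula_rel_unit.

Lemma subformula_interp_expansion : expansion A subformula_interp.
Proof. by []. Qed.

Definition embedded_at (psi : formula L) (s : nat) : Prop :=
  forall i, (s <= i < s + fsize psi)%N -> subformula_at phi 0 i = subformula_at psi s i.

Lemma subformula_interp_correct_at psi s :
  embedded_at psi s -> {subset fvars psi <= V} -> (s + fsize psi <= n.+1)%N ->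
  correct_at A subformula_interp psi s.
Proof.
move=> psi_s psiV sn e; have psi_gt0 := fsize_gt0 psi.
rewrite /qval /= inordK ?size_nseq; last by lia.
rewrite psi_s ?subformula_at_root; last by lia.
by apply: feval_agree => v /psiV; apply: env_map.
Qed.

Lemma subformula_interp_correct psi s :
  embedded_at psi s -> {subset fvars psi <= V} -> (s + fsize psi <= n.+1)%N ->
  subformulas_correct A subformula_interp psi s.
Proof.
elim: psi s => [p ts|c|a IHa|a IHa|a IHa b IHb|a IHa b IHb|a IHa b IHb|a IHa b IHb
  |a IHa b IHb|a IHa b IHb|x a IHa|x a IHa] s psi_s psiV sn;
  (split; first exact: subformula_interp_correct_at);
  try split; try apply: IHa; try apply: IHb.
all: try by move: sn => /=; lia.
all: try by move=> v vi; apply: psiV; rewrite /= ?mem_cat ?inE vi ?orbT.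
all: move=> i /andP[si it]; rewrite psi_s /=; last lia.
all: rewrite (_ : (i == s) = false); last by apply/eqP; lia.
all: try done.
all: by case: ifP => // h; lia.
Qed.

End Expansion.

Section Syntax.
Variables (L : language) (n : nat) (V : seq nat).
Implicit Types phi : formula L.

Lemma nth_new_preds i : nth 0%N (new_preds n V) (qidx n V i) = size V.
Proof. by rewrite nth_nseq (leq_trans (ltn_ord _)) // size_nseq. Qed.

Lemma wf_qatom i : wf_oexpr (qatom L n V i).
Proof. by split; [rewrite size_map /= nth_new_preds | rewrite all_map; apply/allP]. Qed.

Lemma wf_quantified_qatom b v i : v \in V ->
  wf_oexpr (OQAtom b v (inr (qidx n V i) : psym (LQ L n V)) (map Var V)).
Proof.
move=> vV; split; rewrite ?all_map ?has_map.
- by rewrite size_map /= nth_new_preds.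
- exact/allP.
- by apply/hasP; exists v => /=.
- by apply/allP => y _ /=; case: (y == v).
Qed.

Lemma wf_node_clauses phi s : wf_formula phi -> {subset fvars phi <= V} ->
  wf_otheory (node_clauses n V phi s).
Proof.
move=> phi_wf phiV; apply: wf_otheory_Forall.
case: phi phi_wf phiV => [p ts|c|a|a|a b|a b|a b|a b|a b|a b|x a|x a] /=;
  rewrite /node_clauses => phi_wf phiV;
  repeat first [ exact: wf_qatom | exact: tc0 | exact: tc1
               | exact: wf_quantified_qatom (phiV _ (mem_head _ _))
               | constructor | split ].
- exact: phi_wf.1.
- by rewrite (eq_all (@wf_term_ext L _)); case: phi_wf.
- exact: phi_wf.
Qed.

Lemma wf_trans phi s : wf_formula phi -> {subset fvars phi <= V} ->
  wf_otheory (trans n V phi s).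
Proof.
elim: phi s => [p ts|c|a IHa|a IHa|a IHa b IHb|a IHa b IHb|a IHa b IHb|a IHa b IHb
  |a IHa b IHb|a IHa b IHb|x a IHa|x a IHa] s phi_wf phiV;
  apply: wf_otheory_cat; try exact: wf_node_clauses.
all: try by [].
all: try by apply: IHa => // v vi; apply: phiV; rewrite inE vi orbT.
all: case: phi_wf => a_wf b_wf; apply: wf_otheory_cat; [apply: IHa | apply: IHb] => //.
all: by move=> v vi; apply: phiV; rewrite mem_cat vi ?orbT.
Qed.

Lemma sumn_tsize_Var : sumn (map (@tsize _) (map (@Var (fsym L)) V)) = size V.
Proof. by elim: V => //= v V' ->. Qed.

(* At most nine literals, each of size at most 2 (|V| + 3) + 1, plus the atom
   of an atomic node. *)
Lemma otsize_node_clauses phi s :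
  (otsize (node_clauses n V phi s) <= 9 * (2 * size V + 7) + fsize phi)%N.
Proof.
by case: phi => *; rewrite /node_clauses /otsize /ocsize /olsize /= ?sumn_tsize_Var; lia.
Qed.

Lemma otsize_trans phi s :
  (otsize (trans n V phi s) <= fsize phi * (9 * (2 * size V + 7) + fsize phi))%N.
Proof.
elim: phi s => [p ts|c|a IHa|a IHa|a IHa b IHb|a IHa b IHb|a IHa b IHb|a IHa b IHb
  |a IHa b IHb|a IHa b IHb|x a IHa|x a IHa] s;
  apply: leq_trans (leq_otsize_cat (otsize_node_clauses _ s) _) _.
all: try exact: (leq_otsize_cat (IHa _) (IHb _)).
all: try exact: IHa.
all: try exact: leqnn.
all: rewrite /= ?addn0; move: (9 * _)%N => K.
all: try by rewrite mulnDl mul1n leq_addr.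
all: nia.
Qed.

Lemma otconsts_node_clauses phi s :
  {subset otconsts (node_clauses n V phi s) <= 0 :: 1 :: fconsts phi}.
Proof.
case: phi => * r; rewrite /node_clauses /otconsts /= !inE.
all: by case: (r == 0); case: (r == 1) => //=; rewrite ?orbF.
Qed.

Lemma otconsts_trans phi s : {subset otconsts (trans n V phi s) <= 0 :: 1 :: fconsts phi}.
Proof.
elim: phi s => [p ts|c|a IHa|a IHa|a IHa b IHb|a IHa b IHb|a IHa b IHb|a IHa b IHb
  |a IHa b IHb|a IHa b IHb|x a IHa|x a IHa] s;
  apply: sub_otconsts_cat; try exact: otconsts_node_clauses; try exact: IHa; try done.
all: apply: sub_otconsts_cat => [r /IHa|r /IHb]; rewrite !inE mem_cat.
all: by case/or3P=> ->; rewrite ?orbT.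
Qed.

Lemma trans_clauses_nonempty phi s : all (fun C => size C != 0%N) (trans n V phi s).
Proof.
elim: phi s => [p ts|c|a IHa|a IHa|a IHa b IHb|a IHa b IHb|a IHa b IHb|a IHa b IHb
  |a IHa b IHb|a IHa b IHb|x a IHa|x a IHa] s.
all: by rewrite /= ?all_cat ?IHa ?IHb.
Qed.

Definition headed_by_qatom (C : oclause (LQ L n V)) : Prop :=
  exists i r rest, C = eq_lit (qatom L n V i) r :: rest.

Lemma trans_headed phi s : List.Forall headed_by_qatom (trans n V phi s).
Proof.
elim: phi s => [p ts|c|a IHa|a IHa|a IHa b IHb|a IHa b IHb|a IHa b IHb|a IHa b IHb
  |a IHa b IHb|a IHa b IHb|x a IHa|x a IHa] s;
  apply: Forall_cat; try apply: Forall_cat; try exact: IHa; try exact: IHb.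
all: by rewrite /node_clauses; repeat constructor; do 3 eexists.
Qed.

Lemma wf_theory phi : wf_formula phi -> {subset fvars phi <= V} ->
  wf_otheory (theory n V phi).
Proof.
move=> phi_wf phiV; apply: (@wf_otheory_cat _ [:: _]); last exact: wf_trans.
by apply: wf_otheory_Forall; repeat first [exact: wf_qatom | exact: tc1 | constructor].
Qed.

Lemma otsize_theory phi :
  (otsize (theory n V phi) <=
   fsize phi * (9 * (2 * size V + 7) + fsize phi) + size V + 3)%N.
Proof.
rewrite (otsize_cat [:: _]) addnC -addnA leq_add ?otsize_trans //.
by rewrite /otsize /ocsize /olsize /= sumn_tsize_Var; lia.
Qed.

Lemma otconsts_theory phi : {subset otconsts (theory n V phi) <= 0 :: 1 :: fconsts phi}.
Proof.
apply: (@sub_otconsts_cat _ [:: _]); last exact: otconsts_trans.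
by move=> r; rewrite /otconsts /= !inE => ->; rewrite orbT.
Qed.

Lemma theory_has_new_pred phi C : List.In C (theory n V phi) -> has_new_pred C.
Proof.
have : List.Forall headed_by_qatom (theory n V phi).
  by constructor; [do 3 eexists | exact: trans_headed].
move=> /List.Forall_forall Sh /Sh [i [r [rest ->]]].
by exists (eq_lit (qatom L n V i) r); split; [left | left; exists (qidx n V i)].
Qed.

End Syntax.

Theorem lemma3 :
  exists c : nat, forall (L : language) (phi : formula L), wf_formula phi ->
  exists (Q : seq nat) (S : otheory (ext L Q)),
    wf_otheory S /\
    (* (a) *) (size Q <= 2 * fsize phi)%N /\
    (* (b) *) ((Q = [::] /\ S = [:: [::]]) \/ (Q = [::] /\ S = [::]) \/
               (Q <> [::] /\ all (fun C => size C != 0%N) S /\ S <> [::])) /\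
    (* (c) *) (forall (U : Type), U -> forall A : interp L U,
                 fmodels A phi <->
                 exists A' : interp (ext L Q) U, expansion A A' /\ tmodels A' S) /\
    (* (d) *) (otsize S <= c * (fsize phi) ^ 2)%N /\
    (* (e) *) ((S <> [::] /\ S <> [:: [::]]) ->
                 Q <> [::] /\ forall C, List.In C S -> has_new_pred C) /\
    (* (f) *) (forall r, r \in otconsts S -> r != 0%R -> r != 1%R -> r \in fconsts phi).
Proof.
exists 86 => L phi phi_wf.
have phi_gt0 := fsize_gt0 phi; have V_le := size_fvars phi.
exists (new_preds (fsize phi) (fvars phi)), (theory (fsize phi) (fvars phi) phi).
split; first exact: wf_theory.
split; first by rewrite size_nseq; lia.
split; first by right; right; rewrite /= trans_clauses_nonempty.
split.
  move=> U u0 A; split=> [phi1|[A' [AA' /(theory_modelsP AA') []//]]].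
  exists (subformula_interp A u0 phi_wf); split; first exact: subformula_interp_expansion.
  apply/theory_modelsP; split => //; apply: subformula_interp_correct => //; lia.
split.
  (* With |V| <= |phi|, the bound of otsize_theory is at most
     19 |phi|^2 + 64 |phi| + 3 <= 86 |phi|^2. *)
  apply: leq_trans (otsize_theory _ _ _) _.
  move: (fsize phi) (size (fvars phi)) phi_gt0 V_le => m v m_gt0 v_le.
  have := leq_mul (leqnn m) v_le; nia.
split; first by move=> _; split=> //; exact: theory_has_new_pred.
by move=> r /otconsts_theory; rewrite !inE => /or3P[->|->|].
Qed.
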